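(* For every unitary $U$ on $\mathbb C^2\otimes\mathbb C^2$ and every unit vector $|\beta\rangle\in\mathbb C^2$, there exists a unit vector $|\alpha\rangle\in\mathbb C^2$ and density operators $\alpha',\beta'$ on $\mathbb C^2$ such that $U(|\alpha\rangle\langle\alpha|\otimes|\beta\rangle\langle\beta|)U^\dagger=\alpha'\otimes\beta'$. *)

From HB Require Import structures.
From mathcomp Require Import all_boot all_order all_algebra.
From mathcomp Require Import spectral.
From mathcomp Require Import complex mxtens.
From mathcomp Require Import reals.

Set Implicit Arguments.
Unset Strict Implicit.
Unset Printing Implicit Defensive.

Import Order.TTheory GRing.Theory Num.Theory.
Local Open Scope ring_scope.
Local Open Scope sesquilinear_scope.

Definition adj {C : numClosedFieldType} {m n} (A : 'M[C]_(m, n)) : 'M[C]_(n, m) :=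
  A ^t*.

Definition unit_vec {C : numClosedFieldType} {n} (v : 'cV[C]_n) : Prop :=
  (adj v *m v) 0 0 = 1.

Definition ketbra {C : numClosedFieldType} {n} (v : 'cV[C]_n) : 'M[C]_n :=
  v *m adj v.

Definition density {C : numClosedFieldType} {n} (A : 'M[C]_n) : Prop :=
  [/\ adj A = A,
      (forall x : 'cV[C]_n, 0 <= (adj x *m A *m x) 0 0)
    & \tr A = 1].

(* Write alpha = s e_0 + t e_1.  The vector U (alpha (x) beta) depends linearly
   on (s, t), so its 2 x 2 coefficient matrix is a pencil s P + t Q, and over an
   algebraically closed field det (s P + t Q) has a zero (s, t) <> (0, 0).  A
   2 x 2 matrix with zero determinant has rank at most one, i.e. the vector is a
   product a (x) b.  Normalising alpha, unitarity gives |a|^2 |b|^2 = 1, and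
   U (|alpha><alpha| (x) |beta><beta|) U^* = |a><a| (x) |b><b| is the tensor
   product of the density operators |b|^2 |a><a| and |a|^2 |b><b|. *)

From HB Require Import structures.
From mathcomp Require Import all_boot all_order all_algebra.
From mathcomp Require Import spectral.
From mathcomp Require Import complex mxtens.
From mathcomp Require Import reals.
From mathcomp Require Import ring.
Import Order.TTheory GRing.Theory Num.Theory.
Local Open Scope ring_scope.
Set Implicit Arguments.
Unset Strict Implicit.
Unset Printing Implicit Defensive.

Section FieldMatrices.
Variable F : fieldType.

Lemma tensmxZl m n p q (c : F) (A : 'M[F]_(m, n)) (B : 'M[F]_(p, q)) :
  (c *: A) *t B = c *: (A *t B).
Proof. by apply/matrixP=> i j; rewrite !mxE mulrA. Qed.

Lemma tensmxZr m n p q (c : F) (A : 'M[F]_(m, n)) (B : 'M[F]_(p, q)) :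
  A *t (c *: B) = c *: (A *t B).
Proof. by apply/matrixP=> i j; rewrite !mxE mulrCA. Qed.

Lemma det0_rank n (A : 'M[F]_n.+1) : \det A = 0 -> (\rank A <= n)%N.
Proof.
move=> detA; rewrite -ltnS ltn_neqAle rank_leq_row andbT.
by rewrite -/(row_free A) row_free_unit unitmxE unitfE detA eqxx.
Qed.

Lemma eigenvalue_det0 n (A : 'M[F]_n) a :
  eigenvalue A a -> \det (A - a%:M) = 0.
Proof.
rewrite /eigenvalue /eigenspace kermx_eq0 row_free_unit unitmxE unitfE.
by rewrite negbK => /eqP.
Qed.

Lemma mxrank_le1_outer m n (A : 'M[F]_(m, n)) :
  (\rank A <= 1)%N -> exists (a : 'cV[F]_m) (b : 'rV[F]_n), A = a *m b.
Proof.
have [->|nzA] := eqVneq A 0; first by exists 0, 0; rewrite mul0mx.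
have [i nz_i] : exists i, row i A != 0.
  apply/existsP; apply: contraNT nzA => /existsPn zA.
  by apply/eqP/row_matrixP=> i; rewrite row0; apply/eqP/negPn/zA.
move=> rkA; have /submxP[a ->] : (A <= row i A)%MS.
  by rewrite -(geq_leqif (mxrank_leqif_sup (row_sub i A))) rank_rV nz_i.
by exists a, (row i A).
Qed.

Definition tens_coef m n (w : 'cV[F]_(m * n)) : 'M[F]_(m, n) :=
  \matrix_(i, j) w (mxtens_index (i, j)) 0.

Lemma tens_coef_pencil k l m n (U : 'M[F]_(m * n, k * l)) (beta : 'cV[F]_l)
    (s t : F) (x y : 'cV[F]_k) :
  tens_coef (U *m ((s *: x + t *: y) *t beta))
  = s *: tens_coef (U *m (x *t beta)) + t *: tens_coef (U *m (y *t beta)).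
Proof.
apply/matrixP=> i j; rewrite !mxE !big_distrr -big_split; apply: eq_bigr => r _.
by rewrite /= !mxE; ring.
Qed.

Lemma tens_coef_inj m n : injective (@tens_coef m n).
Proof.
move=> v w /matrixP vw; apply/matrixP=> k l; rewrite [l]ord1.
by case: (mxtens_indexP k) => i j; have := vw i j; rewrite !mxE.
Qed.

Lemma tens_coef_tens m n (a : 'cV[F]_m) (b : 'cV[F]_n) :
  tens_coef (a *t b) = a *m b^T.
Proof.
apply/matrixP=> i j; rewrite !mxE mxtens_indexK big_ord1 !mxE.
by rewrite ![(mxtens_unindex _).1]ord1 ![(mxtens_unindex _).2]ord1.
Qed.

Lemma tens_coef_rank_le1 m n (w : 'cV[F]_(m * n)) :
  (\rank (tens_coef w) <= 1)%N ->
  exists (a : 'cV[F]_m) (b : 'cV[F]_n), w = a *t b.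
Proof.
move=> /mxrank_le1_outer[a [b wab]]; exists a, b^T.
by apply: tens_coef_inj; rewrite tens_coef_tens trmxK.
Qed.

End FieldMatrices.

Section ClosedFieldMatrices.
Variable C : numClosedFieldType.

Lemma adjK m n (A : 'M[C]_(m, n)) : adj (adj A) = A.
Proof. exact: trmxCK. Qed.

Lemma adj_mul m n p (A : 'M[C]_(m, n)) (B : 'M[C]_(n, p)) :
  adj (A *m B) = adj B *m adj A.
Proof. by rewrite /adj trmx_mul map_mxM. Qed.

Lemma adjZ m n (c : C) (A : 'M[C]_(m, n)) : adj (c *: A) = c^* *: adj A.
Proof. by apply/matrixP=> i j; rewrite !mxE rmorphM. Qed.

Lemma adj_tens m n p q (A : 'M[C]_(m, n)) (B : 'M[C]_(p, q)) :
  adj (A *t B) = adj A *t adj B.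
Proof. by rewrite /adj trmx_tens map_mxT. Qed.

Definition sqnorm n (v : 'cV[C]_n) : C := (adj v *m v) 0 0.

Lemma sqnormE n (v : 'cV[C]_n) : sqnorm v = \sum_i `|v i 0| ^+ 2.
Proof.
by rewrite /sqnorm mxE; apply: eq_bigr => i _; rewrite !mxE normCK mulrC.
Qed.

Lemma sqnorm_ge0 n (v : 'cV[C]_n) : 0 <= sqnorm v.
Proof. by rewrite sqnormE sumr_ge0 // => i _; rewrite exprn_ge0. Qed.

Lemma sqnorm_eq0 n (v : 'cV[C]_n) : (sqnorm v == 0) = (v == 0).
Proof.
rewrite sqnormE psumr_eq0 => [|i _]; last exact: exprn_ge0.
apply/allP/eqP => [v0|-> i _]; last by rewrite mxE normr0 expr0n eqxx.
apply/matrixP=> i j; rewrite [j]ord1 mxE.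
by have := v0 i (mem_index_enum i); rewrite sqrf_eq0 normr_eq0 => /eqP.
Qed.

Lemma sqnormZ n (c : C) (v : 'cV[C]_n) : sqnorm (c *: v) = `|c| ^+ 2 * sqnorm v.
Proof. by rewrite /sqnorm adjZ -scalemxAr -scalemxAl !mxE normCK mulrA. Qed.

Lemma sqnorm_tens m n (a : 'cV[C]_m) (b : 'cV[C]_n) :
  sqnorm (a *t b) = sqnorm a * sqnorm b.
Proof.
(* [a *t b] has [1 * 1] columns, not [1], so [adj_tens] does not rewrite
   under [sqnorm]; go through the [1 * 1] product instead. *)
have := congr1 (fun M : 'M_(1 * 1) => M 0 0) (tensmx_mul (adj a) (adj b) a b).
rewrite -adj_tens /= => E; apply: etrans E _.
by rewrite mxE ![(mxtens_unindex _).1]ord1 ![(mxtens_unindex _).2]ord1.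
Qed.

Lemma sqnorm_unitary n (U : 'M[C]_n) (v : 'cV[C]_n) :
  U \is unitarymx -> sqnorm (U *m v) = sqnorm v.
Proof. by move=> uU; rewrite /sqnorm adj_mul mulmxA mulmxKtV. Qed.

Lemma unit_vec_normalize n (v : 'cV[C]_n) :
  v != 0 -> unit_vec ((sqrtC (sqnorm v))^-1 *: v).
Proof.
rewrite -sqnorm_eq0 => nz_v; rewrite /unit_vec -/(sqnorm _) sqnormZ.
rewrite normfV ger0_norm ?sqrtC_ge0 ?sqnorm_ge0 // exprVn sqrtCK mulVf //.
Qed.

Lemma ketbra_tens m n (a : 'cV[C]_m) (b : 'cV[C]_n) :
  ketbra (a *t b) = ketbra a *t ketbra b.
Proof. by rewrite /ketbra -tensmx_mul -adj_tens. Qed.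

Lemma ketbra_mul m n (U : 'M[C]_(m, n)) (v : 'cV[C]_n) :
  ketbra (U *m v) = U *m ketbra v *m adj U.
Proof. by rewrite /ketbra adj_mul !mulmxA. Qed.

Lemma ketbra_form n (a x : 'cV[C]_n) :
  adj x *m ketbra a *m x = adj (adj a *m x) *m (adj a *m x).
Proof. by rewrite /ketbra adj_mul adjK !mulmxA. Qed.

Lemma density_scale_ketbra n (c : C) (a : 'cV[C]_n) :
  0 <= c -> c * sqnorm a = 1 -> density (c *: ketbra a).
Proof.
move=> c_ge0 ca1; split.
- by rewrite adjZ geC0_conj // /ketbra adj_mul adjK.
- move=> x; rewrite -scalemxAr -scalemxAl ketbra_form mxE.
  exact: mulr_ge0 (sqnorm_ge0 _).
- by rewrite mxtraceZ /ketbra mxtrace_mulC trace_mx11.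
Qed.

Lemma singular_pencil n (P Q : 'M[C]_n.+1) :
  exists s t : C, (s, t) != (0, 0) /\ \det (s *: P + t *: Q) = 0.
Proof.
have [detP0|nzP] := eqVneq (\det P) 0.
  by exists 1, 0; rewrite scale1r scale0r addr0 xpair_eqE oner_eq0.
have [l /eigenvalue_det0 detl] := eigenvalue_closed (invmx P *m Q) (ltn0Sn n).
exists (- l), 1; split; first by rewrite xpair_eqE oner_eq0 andbF.
have uP : P \in unitmx by rewrite unitmxE unitfE.
have -> : - l *: P + 1 *: Q = P *m (invmx P *m Q - l%:M).
  by rewrite mulmxBr mulKVmx // mul_mx_scalar scale1r scaleNr addrC.
by rewrite det_mulmx detl mulr0.
Qed.

Lemma exists_product_image (U : 'M[C]_(2 * 2)) (beta : 'cV[C]_2) :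
  exists2 alpha : 'cV[C]_2, unit_vec alpha &
    exists a b : 'cV[C]_2, U *m (alpha *t beta) = a *t b.
Proof.
pose coef (v : 'cV[C]_2) := tens_coef (U *m (v *t beta)).
have [s [t [nz_st det0]]] :=
  singular_pencil (coef (delta_mx 0 0)) (coef (delta_mx 1 0)).
pose alpha0 : 'cV[C]_2 := s *: delta_mx 0 0 + t *: delta_mx 1 0.
have nz_alpha0 : alpha0 != 0.
  apply: contraNneq nz_st => /(congr1 (fun v : 'cV[C]_2 => (v 0 0, v 1 0))).
  by rewrite !mxE /= !(mulr1, mulr0, addr0, add0r) => ->.
exists ((sqrtC (sqnorm alpha0))^-1 *: alpha0); first exact: unit_vec_normalize.
apply: tens_coef_rank_le1; apply: det0_rank.
rewrite scalerDr !scalerA tens_coef_pencil -!scalerA -scalerDr.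
by rewrite detZ det0 mulr0.
Qed.

End ClosedFieldMatrices.

Local Open Scope complex_scope.

Theorem theorem6 (R : realType) (U : 'M[R[i]]_(2 * 2)) (beta : 'cV[R[i]]_2) :
  U \is unitarymx -> unit_vec beta ->
  exists (alpha : 'cV[R[i]]_2) (alpha' beta' : 'M[R[i]]_2),
    [/\ unit_vec alpha, density alpha', density beta' &
        U *m (ketbra alpha *t ketbra beta) *m adj U = alpha' *t beta'].
Proof.
move=> uU ubeta; have [alpha ualpha [a [b ab]]] := exists_product_image U beta.
have ab1 : sqnorm a * sqnorm b = 1.
  rewrite -sqnorm_tens -ab sqnorm_unitary // sqnorm_tens.
  by rewrite [sqnorm alpha]ualpha [sqnorm beta]ubeta mulr1.
exists alpha, (sqnorm b *: ketbra a), (sqnorm a *: ketbra b); split => //.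
- by apply: density_scale_ketbra; rewrite ?sqnorm_ge0 // mulrC.
- exact: density_scale_ketbra (sqnorm_ge0 a) ab1.
rewrite -ketbra_tens -ketbra_mul ab ketbra_tens tensmxZl tensmxZr scalerA.
by rewrite mulrC ab1 scale1r.
Qed.
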